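(* Let $k\geq2$ and let $a_1\leq a_2\leq\dots\leq a_k$ be positive integers with $\gcd(a_1,\dots,a_k)=1$, let $S=\langle a_1,\dots,a_k\rangle$, and let $\alpha$ be an integer with $0\leq\alpha\leq a_1a_2$. Then $$n(S,\alpha)\leq\sum_{\lambda=0}^{\lfloor\alpha/a_1\rfloor}\left(\left\lfloor\frac{\alpha-\lambda a_1}{a_2}\right\rfloor+1\right)^{k-1}.$$
   Context: $S=\langle a_1,\dots,a_k\rangle=\{\lambda_1a_1+\dots+\lambda_ka_k:\lambda_i\in\mathbb{Z}_{\geq0}\}$; $n(S,\alpha)$ is the number of elements $s\in S$ with $s\leq\alpha$. *)

From mathcomp Require Import all_boot.
Set Implicit Arguments. Unset Strict Implicit. Unset Printing Implicit Defensive.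

Definition inSG (k : nat) (a : 'I_k -> nat) (s : nat) : Prop :=
  exists lam : 'I_k -> nat, \sum_(i < k) lam i * a i = s.

(* Boolean version: coefficients are searched in [0, s]; this agrees with inSG
   whenever all a_i are positive (then lam_i <= lam_i * a_i <= s). *)
Definition inSGb (k : nat) (a : 'I_k -> nat) (s : nat) : bool :=
  [exists lam : {ffun 'I_k -> 'I_s.+1}, \sum_(i < k) (lam i : nat) * a i == s].

Definition nS (k : nat) (a : 'I_k -> nat) (alpha : nat) : nat :=
  #|[set s : 'I_alpha.+1 | inSGb a s]|.

From mathcomp Require Import all_boot.

Set Implicit Arguments.
Unset Strict Implicit.
Unset Printing Implicit Defensive.

(* Every s <= alpha in S is the weight [sum_i lam_i a_i] of some coefficient
   vector of weight at most alpha, so n(S, alpha) is bounded by the number of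
   such vectors.  Sorting these vectors by their first coordinate l, we have
   l <= alpha / a_1, and once l is fixed every other coordinate satisfies
   lam_i <= (alpha - l a_1) / a_i <= (alpha - l a_1) / a_2, leaving at most
   ((alpha - l a_1) / a_2 + 1)^(k-1) choices. *)

Lemma card_ffun_fixed_le {k n} m (i0 : 'I_k) (A : {pred {ffun 'I_k -> 'I_n}}) :
    {in A &, forall f g : {ffun 'I_k -> 'I_n}, f i0 = g i0} ->
    {in A, forall (f : {ffun 'I_k -> 'I_n}) i, i != i0 -> f i <= m} ->
  #|A| <= m.+1 ^ k.-1.
Proof.
move=> fixed_i0 bounded.
rewrite -(card_ord m.+1) -[k.-1 in X in _ <= X](card_ord k.-1) -card_ffun.
apply: (leq_card_in
  (fun f : {ffun 'I_k -> 'I_n} => [ffun j => inord (f (lift i0 j)) : 'I_m.+1])).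
move=> f g Af Ag /ffunP eq_fg; apply/ffunP => i; apply: val_inj.
case: (unliftP i0 i) => [j ->|->]; last exact: congr1 (fixed_i0 f g Af Ag).
have i0_lift : lift i0 j != i0 by rewrite eq_sym neq_lift.
have := congr1 val (eq_fg j); rewrite !ffunE /=.
by rewrite !inordK // ltnS ?bounded.
Qed.

Section CoefficientVectors.

Variables (k : nat) (a : 'I_k -> nat).

Definition weight {n} (lam : {ffun 'I_k -> 'I_n}) : nat := \sum_(i < k) lam i * a i.

Definition reps alpha := [set lam : {ffun 'I_k -> 'I_alpha.+1} | weight lam <= alpha].

Lemma weight_widen n m (le_nm : n <= m) (lam : {ffun 'I_k -> 'I_n}) :
  weight [ffun i => widen_ord le_nm (lam i)] = weight lam.
Proof. by apply: eq_bigr => i _; rewrite ffunE. Qed.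

Lemma nS_le_card_reps alpha : nS a alpha <= #|reps alpha|.
Proof.
apply: leq_trans (leq_imset_card (fun lam => inord (weight lam) : 'I_alpha.+1) _).
apply/subset_leq_card/subsetP => s; rewrite inE => /existsP [lam /eqP lam_s].
have {}lam_s : weight lam = s := lam_s.
apply/imsetP; exists [ffun i => widen_ord (ltn_ord s) (lam i)].
  by rewrite inE weight_widen lam_s -ltnS.
by apply: val_inj; rewrite /= weight_widen lam_s inordK.
Qed.

Section FirstCoordinate.

Variables (alpha : nat) (i0 : 'I_k).

Lemma weight_ge_term (lam : {ffun 'I_k -> 'I_alpha.+1}) : lam i0 * a i0 <= weight lam.
Proof. by rewrite /weight (bigD1 i0) //= leq_addr. Qed.

Lemma weight_ge_two_terms (lam : {ffun 'I_k -> 'I_alpha.+1}) i :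
  i != i0 -> lam i0 * a i0 + lam i * a i <= weight lam.
Proof. by move=> i_neq; rewrite /weight (bigD1 i0) //= (bigD1 i) //= addnA leq_addr. Qed.

Lemma reps_coef_i0_le lam : 0 < a i0 -> lam \in reps alpha -> lam i0 <= alpha %/ a i0.
Proof.
move=> a_gt0; rewrite inE => /(leq_trans (weight_ge_term lam)).
by rewrite leq_divRL.
Qed.

Lemma reps_coef_le b lam i :
    0 < b -> b <= a i -> i != i0 -> lam \in reps alpha ->
  lam i <= (alpha - lam i0 * a i0) %/ b.
Proof.
move=> b_gt0 b_le i_neq.
rewrite inE => /(leq_trans (weight_ge_two_terms lam i_neq)) le_alpha.
rewrite leq_divRL // leq_subRL ?(leq_trans (leq_addr _ _) le_alpha) //.
by rewrite (leq_trans _ le_alpha) // leq_add2l leq_mul2l b_le orbT.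
Qed.

Lemma card_reps_le b :
    0 < a i0 -> 0 < b -> (forall i, i != i0 -> b <= a i) ->
  #|reps alpha| <=
    \sum_(0 <= l < (alpha %/ a i0).+1) ((alpha - l * a i0) %/ b + 1) ^ (k - 1).
Proof.
move=> a0_gt0 b_gt0 b_le.
set N := (alpha %/ a i0).+1; set F := fun l => ((alpha - l * a i0) %/ b + 1) ^ (k - 1).
have fiber_le (l : 'I_alpha.+1) :
    #|[pred lam in reps alpha | lam i0 == l]| <= (l < N) * F l.
  case: ltnP => [_ | l_ge]; rewrite ?mul1n ?mul0n.
  - rewrite /F addn1 subn1; apply: (@card_ffun_fixed_le _ _ _ i0) => [f g | f].
      by rewrite !inE => /andP [_ /eqP ->] /andP [_ /eqP ->].
    rewrite inE => /andP [f_reps /eqP <-] i i_neq.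
    exact: reps_coef_le (b_le i i_neq) i_neq f_reps.
  - rewrite leqn0; apply/eqP/eq_card0 => lam; rewrite inE.
    apply/negP => /andP [lam_reps /eqP lam_i0].
    by have := reps_coef_i0_le a0_gt0 lam_reps; rewrite lam_i0 leqNgt l_ge.
have -> : \sum_(0 <= l < N) F l = \sum_(l < alpha.+1) (l < N) * F l.
  rewrite (big_nat_widen 0 N alpha.+1) ?ltnS ?leq_div // big_mkcond big_mkord.
  by apply: eq_bigr => l _; case: (l < N); rewrite ?mul1n ?mul0n.
rewrite -sum1_card.
rewrite (partition_big (fun lam : {ffun 'I_k -> 'I_alpha.+1} => lam i0) predT) //=.
by apply: leq_sum => l _; rewrite sum1_card fiber_le.
Qed.

End FirstCoordinate.

End CoefficientVectors.

Theorem mainTheorem9 (k : nat) (a : 'I_k -> nat) (alpha : nat)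
  (i1 i2 : 'I_k) :
  2 <= k ->
  nat_of_ord i1 = 0 -> nat_of_ord i2 = 1 ->
  (forall i j : 'I_k, i <= j -> a i <= a j) ->
  (forall i, 0 < a i) ->
  \big[gcdn/0]_(i < k) a i = 1 ->
  alpha <= a i1 * a i2 ->
  nS a alpha <=
    \sum_(0 <= lam < (alpha %/ a i1).+1) ((alpha - lam * a i1) %/ a i2 + 1) ^ (k - 1).
Proof.
move=> _ i1_0 i2_1 a_mono a_gt0 _ _.
have a2_le i : i != i1 -> a i2 <= a i.
  move=> i_neq; apply: a_mono; rewrite i2_1 lt0n -i1_0.
  by apply: contra i_neq => /eqP/val_inj ->.
apply: leq_trans (nS_le_card_reps a alpha) _.
exact: card_reps_le (a_gt0 i1) (a_gt0 i2) a2_le.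
Qed.
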